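(* Let $M$ be a representation of a quiver $Q$ with $\operatorname{Ext}^1(M,M)=0$. Then for every arrow $\alpha\colon x\to y$ of $Q$, the linear map $M_\alpha\colon M_x\to M_y$ is injective or surjective.
   Context: $k$ is a field; $Q$ is a locally finite quiver; representations are finite-dimensional over $k$, and $\operatorname{Ext}^1$ is computed in the category of finite-dimensional representations of $Q$. *)

(* Finite-dimensional quiver representations over a field k,
   encoded with matrices acting on row vectors: a linear map M_x -> M_y
   with dim M_x = m, dim M_y = n is a matrix A : 'M_(m,n), acting by v |-> v *m A. *)
From HB Require Import structures.
From mathcomp Require Import all_boot all_order all_algebra.
Set Implicit Arguments. Unset Strict Implicit. Unset Printing Implicit Defensive.
Import GRing.Theory.
Local Open Scope ring_scope.

Record quiver := Quiver {
  qvert : eqType;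
  qarr : eqType;
  qsrc : qarr -> qvert;
  qtgt : qarr -> qvert }.

Definition locally_finite (Q : quiver) : Prop :=
  forall x : qvert Q, exists s : seq (qarr Q),
    forall a : qarr Q, (qsrc a == x) || (qtgt a == x) -> a \in s.

Record rep (k : fieldType) (Q : quiver) := Rep {
  rdim : qvert Q -> nat;
  rmap : forall a : qarr Q, 'M[k]_(rdim (qsrc a), rdim (qtgt a)) }.

Definition fin_dim (k : fieldType) (Q : quiver) (M : rep k Q) : Prop :=
  exists s : seq (qvert Q), forall x, rdim M x != 0%N -> x \in s.

Definition is_morph (k : fieldType) (Q : quiver) (M N : rep k Q)
  (f : forall x, 'M[k]_(rdim M x, rdim N x)) : Prop :=
  forall a : qarr Q, rmap M a *m f (qtgt a) = f (qsrc a) *m rmap N a.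

Definition short_exact (k : fieldType) (Q : quiver) (N E M : rep k Q)
  (i : forall x, 'M[k]_(rdim N x, rdim E x))
  (p : forall x, 'M[k]_(rdim E x, rdim M x)) : Prop :=
  is_morph i /\ is_morph p /\
  forall x, [/\ row_free (i x), row_full (p x) & (i x == kermx (p x))%MS].

(* Ext^1(M,N) = 0 in the category of finite-dimensional representations:
   every extension 0 -> N -> E -> M -> 0 with E finite-dimensional splits,
   i.e. p admits a section which is a morphism of representations. *)
Definition Ext1_vanishes (k : fieldType) (Q : quiver) (M N : rep k Q) : Prop :=
  forall (E : rep k Q) (i : forall x, 'M[k]_(rdim N x, rdim E x))
         (p : forall x, 'M[k]_(rdim E x, rdim M x)),
    fin_dim E -> short_exact i p ->
    exists s : forall x, 'M[k]_(rdim M x, rdim E x),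
      is_morph s /\ forall x, s x *m p x = 1%:M.

(* Given representations M, N, an arrow a and a
   linear map phi : M_(src a) -> N_(tgt a), the representation E(phi) with
   E_x = M_x (+) N_x and arrow maps [[M_b, phi_b], [0, N_b]] (phi_b = phi if
   b = a and 0 otherwise) is an extension 0 -> N -> E(phi) -> M -> 0.  If the
   extension splits, the N-component Z of the section satisfies
   phi = M_a Z_(tgt a) - Z_(src a) N_a, i.e. phi is a coboundary.  Hence
   Ext^1(M,N) = 0 makes every such phi a coboundary.

   Now take N = M and suppose M_a is neither injective nor surjective: pick a
   nonzero row vector u with u M_a = 0 and a nonzero column vector c with
   M_a c = 0.  Every coboundary phi satisfies u phi c = 0, but a matrix unit
   phi gives u phi c != 0, a contradiction. *)
From mathcomp Require Import all_boot all_order all_algebra.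
Set Implicit Arguments. Unset Strict Implicit. Unset Printing Implicit Defensive.
Import GRing.Theory.
Local Open Scope ring_scope.

Lemma not_row_free_kernel (k : fieldType) m n (A : 'M[k]_(m, n)) :
  ~~ row_free A -> exists2 u : 'rV_m, u *m A = 0 & u != 0.
Proof.
rewrite -kermx_eq0 => /rowV0Pn [u u_ker u_nz]; exists u => //.
by apply/eqP; rewrite -sub_kermx.
Qed.

Lemma not_row_full_cokernel (k : fieldType) m n (A : 'M[k]_(m, n)) :
  ~~ row_full A -> exists2 c : 'cV_n, A *m c = 0 & c != 0.
Proof.
move=> not_full; have : ~~ row_free A^T by rewrite /row_free mxrank_tr.
case/not_row_free_kernel => v vAT v_nz; exists v^T.
  by apply: trmx_inj; rewrite trmx_mul trmxK vAT trmx0.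
by rewrite -(inj_eq trmx_inj) trmxK trmx0.
Qed.

Lemma pairing_nondegenerate (k : fieldType) m n (u : 'rV[k]_m) (c : 'cV[k]_n) :
  u != 0 -> c != 0 -> exists phi : 'M_(m, n), u *m phi *m c != 0.
Proof.
move=> /rV0Pn [i ui_nz] /cV0Pn [j cj_nz]; exists (delta_mx i j).
have -> : u *m delta_mx i j *m c = col i u *m row j c.
  by rewrite -(mul_delta_mx (0 : 'I_1)) colE rowE !mulmxA.
apply/eqP => /(congr1 (fun B : 'M_1 => B 0 0)); rewrite !mxE big_ord1 !mxE.
by apply/eqP; rewrite mulf_neq0.
Qed.

Section SingleArrowExtension.

Variables (k : fieldType) (Q : quiver) (M N : rep k Q) (a : qarr Q).
Variable phi : 'M[k]_(rdim M (qsrc a), rdim N (qtgt a)).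

Definition at_arrow (b : qarr Q) : 'M[k]_(rdim M (qsrc b), rdim N (qtgt b)) :=
  match @eqP _ a b with
  | ReflectT e => eq_rect a (fun b => 'M_(rdim M (qsrc b), rdim N (qtgt b))) phi b e
  | ReflectF _ => 0
  end.

Lemma at_arrow_self : at_arrow a = phi.
Proof. by rewrite /at_arrow; case: eqP => // e; rewrite (eq_irrelevance e erefl). Qed.

Definition arrow_extension : rep k Q :=
  @Rep k Q (fun x => rdim M x + rdim N x)%N
    (fun b => block_mx (rmap M b) (at_arrow b) 0 (rmap N b)).

Definition ext_incl x : 'M[k]_(rdim N x, rdim arrow_extension x) := row_mx 0 1%:M.
Definition ext_proj x : 'M[k]_(rdim arrow_extension x, rdim M x) := col_mx 1%:M 0.

Lemma arrow_extension_fin_dim : fin_dim M -> fin_dim N -> fin_dim arrow_extension.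
Proof.
move=> [sM finM] [sN finN]; exists (sM ++ sN) => x /=.
by rewrite addn_eq0 negb_and mem_cat => /orP [/finM -> | /finN ->]; rewrite ?orbT.
Qed.

Lemma arrow_extension_short_exact : short_exact ext_incl ext_proj.
Proof.
split; [|split].
- move=> b; rewrite /ext_incl /= mul_mx_row mulmx0 mulmx1.
  rewrite (@mul_row_block _ _ (rdim M (qsrc b)) (rdim N (qsrc b)) (rdim M (qtgt b))).
  by rewrite !mul0mx !mul1mx !add0r.
- move=> b; rewrite /ext_proj /= mul_col_mx !mul_row_col.
  by rewrite mul_col_mx !mulmx1 !mulmx0 mul1mx mul0mx !addr0.
- move=> x; split.
  + by apply/row_freeP; exists (col_mx 0 1%:M); rewrite mul_row_col mul0mx mulmx1 add0r.
  + by apply/row_fullP; exists (row_mx 1%:M 0); rewrite mul_row_col mulmx1 mul0mx addr0.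
  + have incl_ker : (ext_incl x <= kermx (ext_proj x))%MS.
      by rewrite sub_kermx mul_row_col mul0mx mulmx0 addr0.
    rewrite -(eq_leqif (mxrank_leqif_eq incl_ker)) mxrank_ker.
    by rewrite rank_col_mx0 rank_row_0mx !mxrank1 /= addKn.
Qed.

Lemma split_arrow_extension_coboundary (s : forall x, 'M[k]_(rdim M x, rdim arrow_extension x)) :
  is_morph s -> (forall x, s x *m ext_proj x = 1%:M) ->
  exists Z : forall x, 'M[k]_(rdim M x, rdim N x),
    phi = rmap M a *m Z (qtgt a) - Z (qsrc a) *m rmap N a.
Proof.
move=> s_morph s_section; exists (fun x => s x *m col_mx 0 1%:M).
have E_a_col : rmap arrow_extension a *m col_mx 0 1%:M
    = ext_proj (qsrc a) *m phi + col_mx 0 1%:M *m rmap N a.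
  rewrite /= (@mul_block_col _ (rdim M (qsrc a)) (rdim N (qsrc a)) (rdim M (qtgt a))).
  rewrite mulmx0 mul0mx !mulmx1 !add0r at_arrow_self.
  by rewrite /ext_proj !mul_col_mx !mul1mx !mul0mx add_col_mx addr0 add0r.
rewrite mulmxA s_morph -mulmxA E_a_col mulmxDr mulmxA s_section mul1mx mulmxA.
by rewrite addrK.
Qed.

End SingleArrowExtension.

Lemma Ext1_vanishes_coboundary (k : fieldType) (Q : quiver) (M N : rep k Q) :
  fin_dim M -> fin_dim N -> Ext1_vanishes M N ->
  forall (a : qarr Q) (phi : 'M[k]_(rdim M (qsrc a), rdim N (qtgt a))),
  exists Z : forall x, 'M[k]_(rdim M x, rdim N x),
    phi = rmap M a *m Z (qtgt a) - Z (qsrc a) *m rmap N a.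
Proof.
move=> finM finN ext_van a phi.
have [s [s_morph s_section]] := ext_van _ _ _
  (arrow_extension_fin_dim phi finM finN) (arrow_extension_short_exact phi).
exact: split_arrow_extension_coboundary s_morph s_section.
Qed.

Lemma coboundary_pairing (k : fieldType) m n (A : 'M[k]_(m, n))
    (Z : 'M_n) (Z' : 'M_m) (u : 'rV_m) (c : 'cV_n) :
  u *m A = 0 -> A *m c = 0 -> u *m (A *m Z - Z' *m A) *m c = 0.
Proof.
move=> uA Ac; rewrite mulmxBr mulmxBl !mulmxA uA -!mulmxA Ac.
by rewrite !mul0mx !mulmx0 subr0.
Qed.

Theorem lemma2 (k : fieldType) (Q : quiver) (M : rep k Q) :
  locally_finite Q -> fin_dim M -> Ext1_vanishes M M ->
  forall a : qarr Q, row_free (rmap M a) \/ row_full (rmap M a).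
Proof.
move=> _ finM ext_van a.
have [free_a | not_free_a] := boolP (row_free (rmap M a)); first by left.
have [full_a | not_full_a] := boolP (row_full (rmap M a)); first by right.
have [u uA u_nz] := not_row_free_kernel not_free_a.
have [c Ac c_nz] := not_row_full_cokernel not_full_a.
have [phi phi_pairs] := pairing_nondegenerate u_nz c_nz.
have [Z phi_cobound] := Ext1_vanishes_coboundary finM finM ext_van phi.
by rewrite phi_cobound (coboundary_pairing _ _ uA Ac) eqxx in phi_pairs.
Qed.
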